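(* For $n\geq 2$ let $G_n=P_n\rtimes\mathcal{E}^n_\Delta$ denote the centralizer of $r_{1/n}$ in $\mathcal{E}$, and let $G_1=\mathcal{E}$. If $f\in\mathcal{E}$ has finite order, then $C(f)$ is isomorphic to a finite direct product of groups $G_i$.
   Context: Identify $\mathbb{T}^1=\mathbb{R}/\mathbb{Z}$ with $[0,1)$. An interval exchange transformation is a bijection of $\mathbb{T}^1$ that is a translation on each piece of some partition of $[0,1)$ into finitely many half-open intervals $[a,b)$; $\mathcal{E}$ is the group of these, and $C(g)=\{h\in\mathcal{E}:gh=hg\}$. $r_{1/n}(x)=x+1/n$. With $I_i=[\frac{i-1}{n},\frac in)$: $\mathcal{E}^n_\Delta=\{g\in C(r_{1/n}): g(I_i)=I_i\ \forall i\}$ and $P_n=\{g\in C(r_{1/n}):\forall x\in\mathbb{T}^1\ \exists k\in\mathbb{Z},\ g(x)=x+k/n \bmod 1\}$; $C(r_{1/n})=P_n\rtimes\mathcal{E}^n_\Delta$. *)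

From Stdlib Require Import Reals Lra Arith.
Open Scope R_scope.

(* The circle T^1 = R/Z, identified with [0,1). *)
Definition T1 : Type := {x : R | 0 <= x < 1}.

Lemma frac_in (x : R) : 0 <= frac_part x < 1.
Proof. destruct (base_fp x) as [H1 H2]; lra. Qed.

Definition toT1 (x : R) : T1 := exist _ (frac_part x) (frac_in x).

Definition is_iet (f : T1 -> T1) : Prop :=
  (exists g : T1 -> T1, (forall x, g (f x) = x) /\ (forall x, f (g x) = x)) /\
  exists (k : nat) (a t : nat -> R),
    a 0%nat = 0 /\ a k = 1 /\
    (forall i, (i < k)%nat -> a i < a (S i)) /\
    (forall (x : T1) i, (i < k)%nat -> a i <= proj1_sig x < a (S i) ->
        f x = toT1 (proj1_sig x + t i)).

Definition centralizer (f h : T1 -> T1) : Prop :=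
  is_iet h /\ forall x, f (h x) = h (f x).

Definition rot (n : nat) : T1 -> T1 := fun x => toT1 (proj1_sig x + / INR n).

Definition G (n : nat) (h : T1 -> T1) : Prop :=
  if Nat.eqb n 1 then is_iet h else centralizer (rot n) h.

Definition finite_order (f : T1 -> T1) : Prop :=
  exists m : nat, (0 < m)%nat /\ forall x, Nat.iter m f x = x.

(* A finite-order IET [f] has finitely many break points, each with a finite [f]-orbit;
   refining [[0,1)] by all these orbits cuts it into cells that [f] permutes by translations.
   Let [X_d] be the union of the cells of minimal period [d].  Every [h] commuting with [f]
   preserves each [X_d].  Laying the cells of [X_d] out as [d] blocks, block [j] holding the
   cells at position [j] along their orbits, and rescaling to [[0,1)] gives a piecewise
   affine bijection [X_d -> T^1] conjugating [f] on [X_d] to [r_{1/d}].  Through it, the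
   restrictions of [C(f)] to [X_d] are exactly [C(r_{1/d}) = G_d] ([f] is the identity on
   [X_1], where one gets all of [E]), and [h] is determined by, and can be glued from, its
   restrictions: [C(f)] is the product of the [G_d] over the periods [d] that occur. *)

From Stdlib Require Import Reals Lra Lia Arith List.
From Stdlib Require Import Classical ClassicalEpsilon FunctionalExtensionality ProofIrrelevance.
Open Scope R_scope.

Definition coord (p : T1) : R := proj1_sig p.

Lemma coord_range p : 0 <= coord p < 1.
Proof. exact (proj2_sig p). Qed.

Lemma frac_part_shift (z : R) (n : Z) : IZR n <= z < IZR n + 1 -> frac_part z = z - IZR n.
Proof. intros Hz. symmetry. apply (Int_part_frac_part_spec z n); lra. Qed.

Lemma frac_part_id x : 0 <= x < 1 -> frac_part x = x.
Proof. intros Hx. rewrite (frac_part_shift x 0); simpl; lra. Qed.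

Lemma coord_toT1 x : 0 <= x < 1 -> coord (toT1 x) = x.
Proof. exact (frac_part_id x). Qed.

Lemma toT1_coord p : toT1 (coord p) = p.
Proof.
  destruct p as [x Hx]; unfold toT1, coord; simpl.
  generalize (frac_in x); rewrite (frac_part_id x Hx); intros H.
  f_equal; apply proof_irrelevance.
Qed.

Lemma coord_inj p q : coord p = coord q -> p = q.
Proof. intros E; rewrite <- (toT1_coord p), <- (toT1_coord q), E; reflexivity. Qed.

Definition lift (h : T1 -> T1) (x : R) : R := coord (h (toT1 x)).

Lemma lift_range h x : 0 <= lift h x < 1.
Proof. apply coord_range. Qed.

Lemma lift_coord h p : lift h (coord p) = coord (h p).
Proof. unfold lift; rewrite toT1_coord; reflexivity. Qed.

Lemma lift_comp h1 h2 x : lift (fun y => h1 (h2 y)) x = lift h1 (lift h2 x).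
Proof. unfold lift; rewrite toT1_coord; reflexivity. Qed.

Lemma lift_inj (h1 h2 : T1 -> T1) : (forall x, 0 <= x < 1 -> lift h1 x = lift h2 x) -> h1 = h2.
Proof.
  intros E; apply functional_extensionality; intros p.
  apply coord_inj; rewrite <- !lift_coord; apply E, coord_range.
Qed.

Lemma lift_iter f j p : coord (Nat.iter j f p) = Nat.iter j (lift f) (coord p).
Proof. induction j as [|j IH]; simpl; auto. rewrite <- IH, lift_coord; reflexivity. Qed.

Lemma iter_lift_range f j x : 0 <= x < 1 -> 0 <= Nat.iter j (lift f) x < 1.
Proof. intros H; destruct j; simpl; auto using lift_range. Qed.

Lemma lift_commute f h : (forall p, f (h p) = h (f p)) ->
  forall x, lift f (lift h x) = lift h (lift f x).
Proof. intros H x; unfold lift; rewrite !toT1_coord, H; reflexivity. Qed.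

Lemma lift_cancel g h : (forall p, g (h p) = p) -> forall x, 0 <= x < 1 -> lift g (lift h x) = x.
Proof. intros H x Hx; unfold lift at 1; unfold lift; rewrite toT1_coord, H; apply coord_toT1, Hx. Qed.

Lemma lift_rot n x : 0 <= x < 1 -> lift (rot n) x = frac_part (x + / INR n).
Proof. intros Hx; unfold lift, rot; fold (coord (toT1 x)); rewrite (coord_toT1 x Hx); reflexivity. Qed.

Lemma iter_succ_r {A} (g : A -> A) j x : Nat.iter (S j) g x = Nat.iter j g (g x).
Proof. induction j as [|j IH]; simpl in *; auto. rewrite IH; reflexivity. Qed.

Lemma iter_add {A} (g : A -> A) i j x : Nat.iter (i + j) g x = Nat.iter i g (Nat.iter j g x).
Proof. induction i as [|i IH]; simpl; auto. rewrite IH; reflexivity. Qed.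

Lemma iter_commute {A} (F H : A -> A) : (forall x, F (H x) = H (F x)) ->
  forall j x, Nat.iter j F (H x) = H (Nat.iter j F x).
Proof. intros C j; induction j as [|j IH]; intros x; simpl; auto. rewrite IH; auto. Qed.

Definition increasing (K : nat) (a : nat -> R) := forall i, (i < K)%nat -> a i < a (S i).

Section Increasing.
Variables (K : nat) (a : nat -> R).
Hypothesis Ha : increasing K a.

Lemma increasing_lt i j : (i < j)%nat -> (j <= K)%nat -> a i < a j.
Proof.
  intros Hij; induction Hij as [|j Hij IH]; intros HK.
  - apply Ha; lia.
  - apply Rlt_trans with (a j); [apply IH; lia | apply Ha; lia].
Qed.

Lemma increasing_le i j : (i <= j)%nat -> (j <= K)%nat -> a i <= a j.
Proof.
  intros Hij HK; destruct (Nat.eq_dec i j) as [->|]; [lra|].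
  left; apply increasing_lt; lia.
Qed.

Lemma increasing_inj i j : (i <= K)%nat -> (j <= K)%nat -> a i = a j -> i = j.
Proof.
  intros Hi Hj E; destruct (lt_eq_lt_dec i j) as [[Hlt|]|Hlt]; auto.
  - pose proof (increasing_lt i j Hlt Hj); lra.
  - pose proof (increasing_lt j i Hlt Hi); lra.
Qed.

Lemma increasing_cover x : a 0%nat <= x < a K -> exists i, (i < K)%nat /\ a i <= x < a (S i).
Proof.
  revert Ha; induction K as [|K' IH]; intros Ha' Hx; [lra|].
  destruct (Rlt_dec x (a K')).
  - destruct (IH (fun i Hi => Ha' i ltac:(lia)) ltac:(lra)) as [i [Hi Hxi]].
    exists i; split; [lia | exact Hxi].
  - exists K'; split; [lia | lra].
Qed.

Lemma increasing_cell_unique i j x : (i < K)%nat -> (j < K)%nat ->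
  a i <= x < a (S i) -> a j <= x < a (S j) -> i = j.
Proof.
  intros Hi Hj Hx Hy; destruct (lt_eq_lt_dec i j) as [[Hlt|]|Hlt]; auto.
  - pose proof (increasing_le (S i) j Hlt ltac:(lia)); lra.
  - pose proof (increasing_le (S j) i Hlt ltac:(lia)); lra.
Qed.

Lemma increasing_not_inside_cell i k x : (i < K)%nat -> (k <= K)%nat ->
  a i < a k -> a k <= x < a (S i) -> False.
Proof.
  intros Hi Hk Hik Hx; destruct (le_lt_dec k i) as [Hle|Hlt].
  - pose proof (increasing_le k i Hle ltac:(lia)); lra.
  - pose proof (increasing_le (S i) k Hlt Hk); lra.
Qed.

End Increasing.

Definition insert_after (i : nat) (y : R) (a : nat -> R) (j : nat) : R :=
  if Nat.leb j i then a j else if Nat.eqb j (S i) then y else a (pred j).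

Section InsertAfter.
Variables (K i : nat) (y : R) (a : nat -> R).
Hypotheses (Hi : (i < K)%nat) (Hy : a i < y < a (S i)).

Lemma insert_after_increasing : increasing K a -> increasing (S K) (insert_after i y a).
Proof.
  intros Hinc j Hj; unfold insert_after.
  destruct (Nat.leb_spec j i); destruct (Nat.leb_spec (S j) i).
  - apply Hinc; lia.
  - destruct (Nat.eqb_spec (S j) (S i)); [replace j with i by lia; lra | lia].
  - lia.
  - destruct (Nat.eqb_spec j (S i)); destruct (Nat.eqb_spec (S j) (S i)); try lia.
    + subst j; simpl; lra.
    + simpl; replace j with (S (pred j)) at 2 by lia; apply Hinc; lia.
Qed.

Lemma insert_after_values j : (j < S K)%nat ->
  insert_after i y a j = y \/ exists k, (k < K)%nat /\ insert_after i y a j = a k.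
Proof.
  intros Hj; unfold insert_after; destruct (Nat.leb_spec j i); [right; exists j; split; auto; lia|].
  destruct (Nat.eqb_spec j (S i)); [left; reflexivity | right; exists (pred j); split; auto; lia].
Qed.

Lemma insert_after_hits k : (k < K)%nat -> exists j, (j < S K)%nat /\ insert_after i y a j = a k.
Proof.
  intros Hk; unfold insert_after; destruct (le_lt_dec k i).
  - exists k; split; [lia|]; destruct (Nat.leb_spec k i); [reflexivity | lia].
  - exists (S k); split; [lia|]; destruct (Nat.leb_spec (S k) i); [lia|].
    destruct (Nat.eqb_spec (S k) (S i)); [lia | reflexivity].
Qed.

End InsertAfter.

Lemma partition_through (l : list R) : (forall x, In x l -> 0 <= x < 1) ->
  exists K (a : nat -> R), a 0%nat = 0 /\ a K = 1 /\ increasing K a /\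
    (forall i, (i < K)%nat -> a i = 0 \/ In (a i) l) /\
    (forall x, In x l -> exists i, (i < K)%nat /\ a i = x).
Proof.
  induction l as [|y l IH]; intros Hl.
  - exists 1%nat, (fun i => if Nat.eqb i 0 then 0 else 1).
    repeat split; auto; try (intros i Hi; replace i with 0%nat by lia; simpl; lra).
    intros x [].
  - destruct IH as [K [a [H0 [H1 [Hinc [Hin Hall]]]]]]; [intros; apply Hl; simpl; auto|].
    assert (Hy : 0 <= y < 1) by (apply Hl; simpl; auto).
    destruct (increasing_cover K a Hinc y ltac:(lra)) as [i [Hi Hyi]].
    destruct (Req_dec (a i) y) as [E|NE].
    + exists K, a; repeat split; auto.
      * intros j Hj; destruct (Hin j Hj); auto; right; simpl; auto.
      * intros x [<-|Hx]; [exists i; auto | apply Hall; auto].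
    + assert (Hy' : a i < y < a (S i)) by lra.
      exists (S K), (insert_after i y a); repeat split.
      * unfold insert_after; simpl; exact H0.
      * unfold insert_after; destruct (Nat.leb_spec (S K) i); [lia|].
        destruct (Nat.eqb_spec (S K) (S i)); [lia | exact H1].
      * apply insert_after_increasing; auto.
      * intros j Hj; destruct (insert_after_values K i y a Hi j Hj) as [->|[k [Hk ->]]];
          [right; left; reflexivity|].
        destruct (Hin k Hk); auto; right; right; auto.
      * intros x [<-|Hx].
        -- exists (S i); split; [lia|]; unfold insert_after.
           destruct (Nat.leb_spec (S i) i); [lia|]; rewrite Nat.eqb_refl; reflexivity.
        -- destruct (Hall x Hx) as [k [Hk <-]]; apply (insert_after_hits K i y a); auto.
Qed.

(** * Piecewise affine maps *)

Definition breakfree (L : list R) (x y : R) := forall b, In b L -> ~ (x < b <= y).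

(* Each point of [L] is the left end of a new piece, as for the half-open pieces of an IET. *)
Definition piecewise_affine (s : R) (L : list R) (c e : R) (F : R -> R) :=
  forall x y, c <= x -> x <= y -> y < e -> breakfree L x y -> F y - F x = s * (y - x).

Lemma breakfree_app L M x y : breakfree (L ++ M) x y <-> breakfree L x y /\ breakfree M x y.
Proof.
  unfold breakfree; split.
  - intros H; split; intros b Hb; apply H, in_or_app; auto.
  - intros [H1 H2] b Hb; apply in_app_or in Hb as [Hb|Hb]; auto.
Qed.

Lemma breakfree_sub L x y x' y' : breakfree L x y -> x <= x' -> y' <= y -> breakfree L x' y'.
Proof. intros H Hx Hy b Hb Hb'; apply (H b Hb); lra. Qed.

Lemma piecewise_affine_ext s L c e F F' : piecewise_affine s L c e F ->
  (forall x, c <= x < e -> F x = F' x) -> piecewise_affine s L c e F'.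
Proof. intros H E x y ? ? ? Hb; rewrite <- !E by lra; apply H; auto. Qed.

Lemma piecewise_affine_slope s s' L c e F : s = s' ->
  piecewise_affine s L c e F -> piecewise_affine s' L c e F.
Proof. intros ->; auto. Qed.

(* A break of [H] at [b] is a break of [H \o G] at [Ginv b]. *)
Lemma piecewise_affine_comp s t L M c e c' e' G H Ginv : 0 < s ->
  piecewise_affine s L c e G -> (forall x, c <= x < e -> c' <= G x < e') ->
  piecewise_affine t M c' e' H -> (forall z, c <= z < e -> Ginv (G z) = z) ->
  piecewise_affine (s * t) (L ++ map Ginv M) c e (fun x => H (G x)).
Proof.
  intros Hs HG Hr HH Hinv x y Hx Hxy Hy Hb; apply breakfree_app in Hb as [HbL HbM].
  pose proof (HG x y Hx Hxy Hy HbL) as E.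
  pose proof (Hr x ltac:(lra)); pose proof (Hr y ltac:(lra)).
  assert (0 <= s * (y - x)) by (apply Rmult_le_pos; lra).
  assert (Hnb : breakfree M (G x) (G y)).
  { intros b Hb [Hb1 Hb2].
    set (z := x + (b - G x) / s).
    assert (Hz1 : x < z) by (unfold z; assert (0 < (b - G x) / s) by (apply Rdiv_lt_0_compat; lra); lra).
    assert (Hz2 : z <= y).
    { unfold z; assert ((b - G x) / s <= y - x); [|lra].
      apply (Rmult_le_reg_r s); auto; unfold Rdiv; rewrite Rmult_assoc, Rinv_l by lra; lra. }
    assert (Gz : G z = b).
    { pose proof (HG x z Hx ltac:(lra) ltac:(lra) (breakfree_sub L x y x z HbL ltac:(lra) ltac:(lra))) as Ez.
      unfold z in *; replace (s * (x + (b - G x) / s - x)) with (b - G x) in Ez by (field; lra); lra. }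
    apply (HbM (Ginv b)); [apply in_map; auto|].
    rewrite <- Gz, Hinv by lra; lra. }
  rewrite (HH (G x) (G y)); try lra; auto.
  rewrite E; ring.
Qed.

Lemma piecewise_affine_glue s K a (Ls : nat -> list R) F : increasing K a ->
  (forall i, (i < K)%nat -> piecewise_affine s (Ls i) (a i) (a (S i)) F) ->
  piecewise_affine s (map a (seq 0 (S K)) ++ flat_map Ls (seq 0 K)) (a 0%nat) (a K) F.
Proof.
  intros Hinc HL x y Hx Hxy Hy Hb; apply breakfree_app in Hb as [Ha HLs].
  destruct (increasing_cover K a Hinc x ltac:(lra)) as [i [Hi Hxi]].
  assert (y < a (S i)).
  { destruct (Rlt_dec y (a (S i))); auto; exfalso.
    apply (Ha (a (S i))); [apply in_map, in_seq; lia | lra]. }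
  apply (HL i Hi); try lra.
  intros b Hb; apply HLs, in_flat_map; exists i; split; auto; apply in_seq; lia.
Qed.

Lemma iet_piecewise_affine f : is_iet f -> exists L, piecewise_affine 1 L 0 1 (lift f).
Proof.
  intros [_ [k [a [t [H0 [Hk [Hinc Hf]]]]]]].
  (* [w i] is where the translate of the i-th piece wraps around 1 *)
  set (w := fun i => IZR (Int_part (a i + t i)) + 1 - t i).
  exists (map a (seq 0 (S k)) ++ map w (seq 0 k)).
  intros x y Hx Hxy Hy Hb; apply breakfree_app in Hb as [Ha Hw].
  destruct (increasing_cover k a Hinc x ltac:(lra)) as [i [Hi Hxi]].
  assert (Hyi : y < a (S i)).
  { destruct (Rlt_dec y (a (S i))); auto; exfalso.
    apply (Ha (a (S i))); [apply in_map, in_seq; lia | lra]. }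
  assert (0 <= a i) by (rewrite <- H0; apply (increasing_le k a Hinc); lia).
  assert (a (S i) <= 1) by (rewrite <- Hk; apply (increasing_le k a Hinc); lia).
  assert (Lf : forall z, a i <= z < a (S i) -> lift f z = frac_part (z + t i)).
  { intros z Hz; unfold lift.
    rewrite (Hf (toT1 z) i Hi) by (fold (coord (toT1 z)); rewrite coord_toT1; lra).
    fold (coord (toT1 z)); rewrite (coord_toT1 z) by lra; reflexivity. }
  rewrite !Lf by lra.
  pose proof (base_Int_part (a i + t i)) as Bn; set (n := Int_part (a i + t i)) in *.
  destruct (Rlt_dec (y + t i) (IZR n + 1)).
  - rewrite !(frac_part_shift _ n); lra.
  - destruct (Rle_dec (IZR n + 1) (x + t i)).
    + rewrite !(frac_part_shift _ (n + 1)); rewrite ?plus_IZR; simpl; lra.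
    + exfalso; apply (Hw (w i)); [apply in_map, in_seq; lia | unfold w; fold n; lra].
Qed.

Definition in_unit (b : R) : bool := if Rle_dec 0 b then if Rlt_dec b 1 then true else false else false.

Lemma in_unit_spec b : in_unit b = true <-> 0 <= b < 1.
Proof.
  unfold in_unit; destruct (Rle_dec 0 b); destruct (Rlt_dec b 1); split; intros;
    try lra; try discriminate; auto.
Qed.

Lemma piecewise_affine_iet f L :
  (exists g : T1 -> T1, (forall x, g (f x) = x) /\ (forall x, f (g x) = x)) ->
  piecewise_affine 1 L 0 1 (lift f) -> is_iet f.
Proof.
  intros Hbij HL; split; auto.
  destruct (partition_through (filter in_unit L)) as [K [a [H0 [H1 [Hinc [Hin Hall]]]]]].
  { intros x Hx; apply filter_In in Hx as [_ Hx]; apply in_unit_spec; auto. }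
  exists K, a, (fun i => lift f (a i) - a i); repeat split; auto.
  intros p i Hi Hp; fold (coord p) in Hp |- *.
  assert (0 <= a i) by (rewrite <- H0; apply (increasing_le K a Hinc); lia).
  pose proof (coord_range p).
  assert (Hnb : breakfree L (a i) (coord p)).
  { intros b Hb [Hb1 Hb2].
    assert (Hbl : In b (filter in_unit L)) by (apply filter_In; split; auto; apply in_unit_spec; lra).
    destruct (Hall b Hbl) as [j [Hj <-]].
    apply (increasing_not_inside_cell K a Hinc i j (coord p)); auto; lia || lra. }
  pose proof (HL (a i) (coord p) ltac:(lra) ltac:(lra) ltac:(lra) Hnb).
  rewrite <- (toT1_coord (f p)), <- lift_coord; f_equal; lra.
Qed.

(** * The cells of a finite-order IET *)

Record cell_structure (F : R -> R) (K : nat) (a : nat -> R) (sg : nat -> nat) (m : nat) : Prop := {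
  cells_start : a 0%nat = 0;
  cells_end : a K = 1;
  cells_increasing : increasing K a;
  cells_order_pos : (0 < m)%nat;
  cells_perm_range : forall i, (i < K)%nat -> (sg i < K)%nat;
  cells_width : forall i, (i < K)%nat -> a (S i) - a i = a (S (sg i)) - a (sg i);
  cells_translate : forall i x, (i < K)%nat -> a i <= x < a (S i) -> F x = x - a i + a (sg i);
  cells_perm_order : forall i, (i < K)%nat -> Nat.iter m sg i = i }.

Section CellsOfFiniteOrder.
Variables (F : R -> R) (m : nat) (L : list R).
Hypotheses (Hm : (0 < m)%nat) (F_range : forall x, 0 <= F x < 1)
  (F_order : forall x, 0 <= x < 1 -> Nat.iter m F x = x)
  (F_affine : piecewise_affine 1 L 0 1 F).
Variables (K : nat) (a : nat -> R).
Hypotheses (Ha0 : a 0%nat = 0) (HaK : a K = 1) (Hinc : increasing K a)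
  (a_closed : forall i, (i < K)%nat -> exists k, (k < K)%nat /\ a k = F (a i))
  (a_breaks : forall b, In b L -> 0 <= b < 1 -> exists k, (k < K)%nat /\ a k = b).

Let a_bounds i : (i <= K)%nat -> 0 <= a i <= 1.
Proof. intros Hi; rewrite <- Ha0, <- HaK; split; apply (increasing_le K a Hinc); lia. Qed.

Lemma cell_translation i x : (i < K)%nat -> a i <= x < a (S i) -> F x = F (a i) + (x - a i).
Proof.
  intros Hi Hx; pose proof (a_bounds i ltac:(lia)); pose proof (a_bounds (S i) ltac:(lia)).
  assert (Hnb : breakfree L (a i) x).
  { intros b Hb [Hb1 Hb2].
    destruct (a_breaks b Hb ltac:(lra)) as [k [Hk <-]].
    apply (increasing_not_inside_cell K a Hinc i k x); auto; lia || lra. }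
  pose proof (F_affine (a i) x ltac:(lra) ltac:(lra) ltac:(lra) Hnb); lra.
Qed.

Lemma iter_endpoint j i : (i < K)%nat -> exists k, (k < K)%nat /\ a k = Nat.iter j F (a i).
Proof.
  induction j as [|j IH]; intros Hi; [exists i; auto|].
  destruct (IH Hi) as [k [Hk Ek]]; destruct (a_closed k Hk) as [k' [Hk' Ek']].
  exists k'; split; auto; simpl; rewrite Ek', Ek; reflexivity.
Qed.

Definition next_cell (i : nat) : nat := epsilon (inhabits 0%nat) (fun k => (k < K)%nat /\ a k = F (a i)).

Lemma next_cell_spec i : (i < K)%nat -> (next_cell i < K)%nat /\ a (next_cell i) = F (a i).
Proof. intros Hi; unfold next_cell; apply epsilon_spec, a_closed, Hi. Qed.

Lemma cell_image_below_one i : (i < K)%nat -> F (a i) + (a (S i) - a i) <= 1.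
Proof.
  intros Hi; pose proof (a_bounds i ltac:(lia)); pose proof (Hinc i Hi).
  destruct (Rle_dec (F (a i) + (a (S i) - a i)) 1) as [|Hgt]; auto; exfalso.
  pose proof (F_range (a i)).
  pose proof (cell_translation i (a i + (1 - F (a i))) Hi ltac:(lra)).
  pose proof (F_range (a i + (1 - F (a i)))); lra.
Qed.

(* Were the image cell shorter, the point [z] of the cell mapped to the right end of the image
   would be an endpoint (endpoints are [F]-closed and [F^m = id]), yet it is inside the cell. *)
Lemma width_le_next i : (i < K)%nat -> a (S i) - a i <= a (S (next_cell i)) - a (next_cell i).
Proof.
  intros Hi; destruct (next_cell_spec i Hi) as [Hs Es]; set (k := next_cell i) in *.
  destruct (Rle_dec (a (S i) - a i) (a (S k) - a k)) as [|Hgt]; auto; exfalso.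
  pose proof (cell_image_below_one i Hi); pose proof (Hinc k Hs).
  pose proof (a_bounds i ltac:(lia)); pose proof (a_bounds (S i) ltac:(lia)).
  assert (HSk : (S k < K)%nat).
  { destruct (Nat.eq_dec (S k) K) as [e|]; [rewrite e in Hgt; lra | lia]. }
  set (z := a i + (a (S k) - a k)).
  assert (Fz : F z = a (S k)) by (unfold z; rewrite (cell_translation i) by (auto; lra); lra).
  destruct (iter_endpoint (m - 1) (S k) HSk) as [k' [Hk' Ek']].
  rewrite <- Fz, <- iter_succ_r in Ek'.
  replace (S (m - 1)) with m in Ek' by lia; rewrite F_order in Ek' by (unfold z; lra).
  apply (increasing_not_inside_cell K a Hinc i k' z); auto; unfold z in *; lia || lra.
Qed.

Lemma iter_next_cell j i : (i < K)%nat ->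
  (Nat.iter j next_cell i < K)%nat /\ a (Nat.iter j next_cell i) = Nat.iter j F (a i) /\
  a (S i) - a i <= a (S (Nat.iter j next_cell i)) - a (Nat.iter j next_cell i).
Proof.
  induction j as [|j IH]; intros Hi; simpl; [repeat split; auto; lra|].
  destruct (IH Hi) as [A1 [A2 A3]]; destruct (next_cell_spec _ A1) as [B1 B2].
  repeat split; auto; [rewrite B2, A2; reflexivity | pose proof (width_le_next _ A1); lra].
Qed.

Lemma next_cell_order i : (i < K)%nat -> Nat.iter m next_cell i = i.
Proof.
  intros Hi; destruct (iter_next_cell m i Hi) as [A1 [A2 _]].
  pose proof (a_bounds i ltac:(lia)); pose proof (a_bounds (S i) ltac:(lia)); pose proof (Hinc i Hi).
  rewrite F_order in A2 by lra.
  apply (increasing_inj K a Hinc); auto; lia.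
Qed.

Lemma partition_cell_structure : cell_structure F K a next_cell m.
Proof.
  split; auto.
  - intros i Hi; apply next_cell_spec, Hi.
  - intros i Hi; apply Rle_antisym; [apply width_le_next, Hi|].
    destruct (next_cell_spec i Hi) as [Hs _].
    destruct (iter_next_cell (m - 1) (next_cell i) Hs) as [_ [_ A3]].
    rewrite <- iter_succ_r in A3; replace (S (m - 1)) with m in A3 by lia.
    rewrite next_cell_order in A3 by exact Hi; exact A3.
  - intros i x Hi Hx; rewrite (cell_translation i x Hi Hx), (proj2 (next_cell_spec i Hi)); ring.
  - exact next_cell_order.
Qed.

End CellsOfFiniteOrder.

Lemma finite_order_cell_structure f : is_iet f -> finite_order f ->
  exists K a sg m, cell_structure (lift f) K a sg m.
Proof.
  intros Hf [m [Hm Hfm]]; set (F := lift f).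
  assert (F_order : forall x, 0 <= x < 1 -> Nat.iter m F x = x).
  { intros x Hx; rewrite <- (coord_toT1 x Hx) at 1; unfold F; rewrite <- lift_iter, Hfm.
    apply coord_toT1, Hx. }
  destruct (iet_piecewise_affine f Hf) as [L HL].
  (* the partition must contain the orbits of 0 and of the break points of [F] *)
  set (seeds := 0 :: filter in_unit L).
  set (B := flat_map (fun b => map (fun j => Nat.iter j F b) (seq 0 m)) seeds).
  assert (Hseed : forall b, In b seeds -> 0 <= b < 1).
  { intros b [<-|Hb]; [lra | apply filter_In in Hb as [_ Hb]; apply in_unit_spec, Hb]. }
  assert (HB : forall x, In x B <-> exists b j, In b seeds /\ (j < m)%nat /\ x = Nat.iter j F b).
  { intros x; unfold B; rewrite in_flat_map; split.
    - intros [b [Hb Hx]]; apply in_map_iff in Hx as [j [<- Hj]]; apply in_seq in Hj.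
      exists b, j; repeat split; auto; lia.
    - intros [b [j [Hb [Hj ->]]]]; exists b; split; auto.
      apply in_map_iff; exists j; split; auto; apply in_seq; lia. }
  assert (HBr : forall x, In x B -> 0 <= x < 1).
  { intros x Hx; apply HB in Hx as [b [j [Hb [_ ->]]]]; apply iter_lift_range, Hseed, Hb. }
  assert (HBF : forall x, In x B -> In (F x) B).
  { intros x Hx; apply HB in Hx as [b [j [Hb [Hj ->]]]]; apply HB.
    destruct (Nat.eq_dec (S j) m) as [e|ne].
    - exists b, 0%nat; split; [exact Hb | split; [lia|]].
      change (F (Nat.iter j F b)) with (Nat.iter (S j) F b); rewrite e, F_order; auto.
    - exists b, (S j); repeat split; auto; lia. }
  destruct (partition_through B HBr) as [K [a [H0 [H1 [Hinc [Hin Hall]]]]]].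
  exists K, a, (next_cell F K a), m.
  apply (partition_cell_structure F m L); auto.
  - intros x; apply lift_range.
  - intros i Hi; apply Hall, HBF.
    destruct (Hin i Hi) as [->|]; auto; apply HB; exists 0, 0%nat; repeat split; simpl; auto; lia.
  - intros b Hb Hb01; apply Hall, HB; exists b, 0%nat; repeat split; [|lia].
    right; apply filter_In; split; auto; apply in_unit_spec, Hb01.
Qed.

(** * Orbits of the permutation of cells *)

Lemma exists_least (P : nat -> Prop) : (exists n, P n) ->
  exists n, P n /\ forall n', (n' < n)%nat -> ~ P n'.
Proof.
  intros [n Hn]; revert Hn; induction n as [n IH] using lt_wf_ind; intros Hn.
  destruct (classic (exists n', (n' < n)%nat /\ P n')) as [[n' [H1 H2]]|H].
  - apply (IH n' H1 H2).
  - exists n; split; auto; intros n' Hn' Hp; apply H; eauto.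
Qed.

Record perm_of_order (K : nat) (sg : nat -> nat) (m : nat) : Prop := {
  perm_order_pos : (0 < m)%nat;
  perm_range : forall i, (i < K)%nat -> (sg i < K)%nat;
  perm_order : forall i, (i < K)%nat -> Nat.iter m sg i = i }.

Definition period (sg : nat -> nat) (i : nat) : nat :=
  epsilon (inhabits 1%nat) (fun d => (0 < d)%nat /\ Nat.iter d sg i = i /\
    forall d', (0 < d')%nat -> (d' < d)%nat -> Nat.iter d' sg i <> i).

Definition in_orbit (sg : nat -> nat) (i i' : nat) : Prop := exists j, Nat.iter j sg i = i'.

Definition orbit_least (K : nat) (sg : nat -> nat) (r : nat) : Prop :=
  (r < K)%nat /\ forall j, (r <= Nat.iter j sg r)%nat.

Definition orbit_rep (K : nat) (sg : nat -> nat) (i : nat) : nat :=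
  epsilon (inhabits 0%nat) (fun r => orbit_least K sg r /\ in_orbit sg r i).

Definition orbit_pos (K : nat) (sg : nat -> nat) (i : nat) : nat :=
  epsilon (inhabits 0%nat) (fun j => (j < period sg i)%nat /\ Nat.iter j sg (orbit_rep K sg i) = i).

Section PermutationOrbits.
Context {K : nat} {sg : nat -> nat} {m : nat}.
Hypothesis Hsg : perm_of_order K sg m.

Lemma iter_perm_range j i : (i < K)%nat -> (Nat.iter j sg i < K)%nat.
Proof. induction j as [|j IH]; intros Hi; simpl; auto; apply (perm_range _ _ _ Hsg), IH, Hi. Qed.

Lemma iter_perm_order q i : (i < K)%nat -> Nat.iter (q * m) sg i = i.
Proof.
  induction q as [|q IH]; intros Hi; simpl; auto.
  rewrite iter_add, (perm_order _ _ _ Hsg) by (apply iter_perm_range, Hi); apply IH, Hi.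
Qed.

Lemma perm_inj i i' : (i < K)%nat -> (i' < K)%nat -> sg i = sg i' -> i = i'.
Proof.
  intros Hi Hi' E; pose proof (perm_order_pos _ _ _ Hsg).
  rewrite <- (perm_order _ _ _ Hsg i Hi), <- (perm_order _ _ _ Hsg i' Hi').
  replace m with (S (m - 1)) by lia; rewrite !iter_succ_r, E; reflexivity.
Qed.

Lemma iter_perm_inj j i i' : (i < K)%nat -> (i' < K)%nat ->
  Nat.iter j sg i = Nat.iter j sg i' -> i = i'.
Proof.
  induction j as [|j IH]; intros Hi Hi' E; simpl in *; auto.
  apply IH; auto; apply perm_inj; auto; apply iter_perm_range; auto.
Qed.

Lemma period_spec i : (i < K)%nat ->
  (0 < period sg i)%nat /\ Nat.iter (period sg i) sg i = i /\
  forall d', (0 < d')%nat -> (d' < period sg i)%nat -> Nat.iter d' sg i <> i.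
Proof.
  intros Hi; unfold period; apply epsilon_spec.
  destruct (exists_least (fun d => (0 < d)%nat /\ Nat.iter d sg i = i)) as [d [[H1 H2] H3]].
  { exists m; split; [apply (perm_order_pos _ _ _ Hsg) | apply (perm_order _ _ _ Hsg), Hi]. }
  exists d; repeat split; auto; intros d' Hd' Hdd E; apply (H3 d' Hdd); auto.
Qed.

Lemma iter_mod_period j i : (i < K)%nat -> Nat.iter j sg i = Nat.iter (j mod period sg i) sg i.
Proof.
  intros Hi; destruct (period_spec i Hi) as [P1 [P2 _]]; set (p := period sg i) in *.
  assert (Hq : forall q, Nat.iter (p * q) sg i = i).
  { induction q as [|q IH]; [rewrite Nat.mul_0_r; reflexivity|].
    replace (p * S q)%nat with (p + p * q)%nat by lia; rewrite iter_add, IH; exact P2. }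
  transitivity (Nat.iter (j mod p + p * (j / p)) sg i).
  - f_equal; rewrite Nat.add_comm; apply Nat.div_mod; lia.
  - rewrite iter_add, Hq; reflexivity.
Qed.

Lemma period_unique i d : (i < K)%nat -> (0 < d)%nat -> Nat.iter d sg i = i ->
  (forall d', (0 < d')%nat -> (d' < d)%nat -> Nat.iter d' sg i <> i) -> period sg i = d.
Proof.
  intros Hi Hd E M; destruct (period_spec i Hi) as [P1 [P2 P3]].
  destruct (lt_eq_lt_dec (period sg i) d) as [[Hlt|]|Hlt]; auto; exfalso;
    [apply (M (period sg i)) | apply (P3 d)]; auto.
Qed.

Lemma period_iter j i : (i < K)%nat -> period sg (Nat.iter j sg i) = period sg i.
Proof.
  intros Hi; destruct (period_spec i Hi) as [P1 [P2 P3]].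
  apply period_unique; auto; [apply iter_perm_range, Hi| |].
  - rewrite <- iter_add, Nat.add_comm, iter_add, P2; reflexivity.
  - intros d' H1 H2 E; rewrite <- iter_add, Nat.add_comm, iter_add in E.
    apply iter_perm_inj in E; auto; [apply (P3 d'); auto | apply iter_perm_range, Hi].
Qed.

Lemma in_orbit_sym i i' : (i < K)%nat -> in_orbit sg i i' -> in_orbit sg i' i.
Proof.
  intros Hi [j <-]; exists ((m - 1) * j)%nat; pose proof (perm_order_pos _ _ _ Hsg).
  rewrite <- iter_add; replace ((m - 1) * j + j)%nat with (j * m)%nat by nia.
  apply iter_perm_order, Hi.
Qed.

Lemma in_orbit_trans i i' i'' : in_orbit sg i i' -> in_orbit sg i' i'' -> in_orbit sg i i''.
Proof. intros [j <-] [j' <-]; exists (j' + j)%nat; apply iter_add. Qed.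

Lemma period_in_orbit i i' : (i < K)%nat -> in_orbit sg i i' -> period sg i' = period sg i.
Proof. intros Hi [j <-]; apply period_iter, Hi. Qed.

Lemma orbit_least_exists i : (i < K)%nat -> exists r, orbit_least K sg r /\ in_orbit sg r i.
Proof.
  intros Hi; destruct (exists_least (in_orbit sg i)) as [r [[j0 Hr] Hmin]]; [exists i, 0%nat; auto|].
  exists r; split.
  - split; [subst r; apply iter_perm_range, Hi|].
    intros j; destruct (le_lt_dec r (Nat.iter j sg r)) as [|Hlt]; auto; exfalso.
    apply (Hmin _ Hlt); exists (j + j0)%nat; rewrite iter_add, Hr; reflexivity.
  - apply in_orbit_sym; auto; exists j0; auto.
Qed.

Lemma orbit_least_unique r r' i : orbit_least K sg r -> orbit_least K sg r' ->
  in_orbit sg r i -> in_orbit sg r' i -> r = r'.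
Proof.
  intros [Hr Hr1] [Hr' Hr1'] O1 O2.
  destruct (in_orbit_trans r i r' O1 (in_orbit_sym r' i Hr' O2)) as [j1 E1].
  destruct (in_orbit_sym r r' Hr (ex_intro _ j1 E1)) as [j2 E2].
  specialize (Hr1 j1); specialize (Hr1' j2); lia.
Qed.

Lemma orbit_rep_spec i : (i < K)%nat ->
  orbit_least K sg (orbit_rep K sg i) /\ in_orbit sg (orbit_rep K sg i) i.
Proof. intros Hi; unfold orbit_rep; apply epsilon_spec, orbit_least_exists, Hi. Qed.

Lemma orbit_rep_eq i r : (i < K)%nat -> orbit_least K sg r -> in_orbit sg r i -> orbit_rep K sg i = r.
Proof.
  intros Hi Hr O; destruct (orbit_rep_spec i Hi); apply (orbit_least_unique _ _ i); auto.
Qed.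

Lemma orbit_rep_range i : (i < K)%nat -> (orbit_rep K sg i < K)%nat.
Proof. intros Hi; apply (orbit_rep_spec i Hi). Qed.

Lemma period_orbit_rep i : (i < K)%nat -> period sg (orbit_rep K sg i) = period sg i.
Proof.
  intros Hi; destruct (orbit_rep_spec i Hi) as [[Hr _] O].
  symmetry; apply period_in_orbit; auto.
Qed.

Lemma orbit_pos_spec i : (i < K)%nat ->
  (orbit_pos K sg i < period sg i)%nat /\ Nat.iter (orbit_pos K sg i) sg (orbit_rep K sg i) = i.
Proof.
  intros Hi; unfold orbit_pos; apply epsilon_spec.
  destruct (orbit_rep_spec i Hi) as [[Hr _] [j Ej]].
  exists (j mod period sg i); split.
  - apply Nat.mod_upper_bound; destruct (period_spec i Hi); lia.
  - rewrite <- (period_orbit_rep i Hi), <- iter_mod_period; auto.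
Qed.

Lemma orbit_pos_unique r j j' : orbit_least K sg r -> (j < period sg r)%nat -> (j' < period sg r)%nat ->
  Nat.iter j sg r = Nat.iter j' sg r -> j = j'.
Proof.
  intros [Hr _] Hj Hj' E; destruct (period_spec r Hr) as [P1 [P2 P3]].
  assert (Hshift : forall u w, (u < w)%nat -> (w < period sg r)%nat ->
            Nat.iter u sg r = Nat.iter w sg r -> False).
  { intros u w Huw Hw Euw; replace w with (u + (w - u))%nat in Euw by lia.
    rewrite iter_add in Euw; apply (P3 (w - u)%nat); try lia.
    apply (iter_perm_inj u); [apply iter_perm_range, Hr | exact Hr | symmetry; exact Euw]. }
  destruct (lt_eq_lt_dec j j') as [[Hlt|]|Hlt]; auto; exfalso; eapply Hshift; eauto.
Qed.

Lemma orbit_rep_pos_iter r j : orbit_least K sg r -> (j < period sg r)%nat ->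
  orbit_rep K sg (Nat.iter j sg r) = r /\ orbit_pos K sg (Nat.iter j sg r) = j.
Proof.
  intros Hr Hj; pose proof (proj1 Hr) as Hr0.
  assert (Hi : (Nat.iter j sg r < K)%nat) by (apply iter_perm_range, Hr0).
  assert (E : orbit_rep K sg (Nat.iter j sg r) = r) by (apply orbit_rep_eq; auto; exists j; auto).
  split; auto.
  destruct (orbit_pos_spec _ Hi) as [J1 J2]; rewrite E in J2; rewrite period_iter in J1 by exact Hr0.
  apply (orbit_pos_unique r); auto.
Qed.

Lemma orbit_rep_perm i : (i < K)%nat -> orbit_rep K sg (sg i) = orbit_rep K sg i.
Proof.
  intros Hi; destruct (orbit_rep_spec i Hi) as [Hr O].
  apply orbit_rep_eq; [apply (perm_range _ _ _ Hsg), Hi | exact Hr|].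
  apply (in_orbit_trans _ i); auto; exists 1%nat; reflexivity.
Qed.

Lemma orbit_pos_perm i : (i < K)%nat ->
  orbit_pos K sg (sg i) = if Nat.eqb (S (orbit_pos K sg i)) (period sg i) then 0%nat else S (orbit_pos K sg i).
Proof.
  intros Hi; destruct (orbit_rep_spec i Hi) as [Hr _]; destruct (orbit_pos_spec i Hi) as [J1 J2].
  set (r := orbit_rep K sg i) in *; set (j := orbit_pos K sg i) in *.
  rewrite <- (period_orbit_rep i Hi) in J1 |- *; fold r in J1 |- *.
  destruct (period_spec r (proj1 Hr)) as [P1 [P2 _]].
  change (sg i) with (Nat.iter 1 sg i); rewrite <- J2, <- iter_add; simpl Nat.add.
  destruct (Nat.eqb_spec (S j) (period sg r)) as [e|ne].
  - rewrite e, P2; apply (orbit_rep_pos_iter r 0 Hr); lia.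
  - apply (orbit_rep_pos_iter r (S j) Hr); lia.
Qed.

End PermutationOrbits.

(** * Charts of the period sets *)

Fixpoint sum_when (P : nat -> Prop) (g : nat -> R) (n : nat) : R :=
  match n with
  | O => 0
  | S n' => sum_when P g n' + (if excluded_middle_informative (P n') then g n' else 0)
  end.

Section SumWhen.
Variables (P : nat -> Prop) (g : nat -> R).
Hypothesis g_nonneg : forall i, 0 <= g i.

Lemma sum_when_le n n' : (n <= n')%nat -> sum_when P g n <= sum_when P g n'.
Proof.
  intros H; induction H as [|n' H IH]; [lra|]; simpl.
  destruct (excluded_middle_informative (P n')); pose proof (g_nonneg n'); lra.
Qed.

Lemma sum_when_nonneg n : 0 <= sum_when P g n.
Proof. apply (sum_when_le 0 n); lia. Qed.

Lemma sum_when_add_lt r r' : P r -> (r < r')%nat -> sum_when P g r + g r <= sum_when P g r'.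
Proof.
  intros Hr H; replace (sum_when P g r + g r) with (sum_when P g (S r)).
  - apply sum_when_le, H.
  - simpl; destruct (excluded_middle_informative (P r)); tauto.
Qed.

Lemma sum_when_find n t : 0 <= t < sum_when P g n ->
  exists r, (r < n)%nat /\ P r /\ sum_when P g r <= t < sum_when P g r + g r.
Proof.
  induction n as [|n IH]; intros Ht; simpl in Ht; [lra|].
  destruct (Rlt_dec t (sum_when P g n)) as [Hlt|Hge].
  - destruct IH as [r [? ?]]; [lra | exists r; split; auto].
  - destruct (excluded_middle_informative (P n)); [exists n; repeat split; auto; lra | lra].
Qed.

End SumWhen.

Lemma floor_nat (d : nat) (t : R) : 0 <= t < INR d -> exists j, (j < d)%nat /\ INR j <= t < INR j + 1.
Proof.
  induction d as [|d IH]; intros Ht; [simpl in Ht; lra|].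
  destruct (Rlt_dec t (INR d)).
  - destruct (IH ltac:(lra)) as [j [? ?]]; exists j; split; auto.
  - exists d; split; auto; rewrite S_INR in Ht; lra.
Qed.

Lemma INR_lt_nat (j d : nat) : (j < d)%nat -> INR j + 1 <= INR d.
Proof. intros H; rewrite <- S_INR; apply le_INR; lia. Qed.

Section Chart.
Variables (F : R -> R) (K : nat) (a : nat -> R) (sg : nat -> nat) (m : nat).
Hypothesis CS : cell_structure F K a sg m.

Let Hsg : perm_of_order K sg m.
Proof. destruct CS; split; auto. Qed.

Let Hinc : increasing K a := cells_increasing _ _ _ _ _ CS.

Definition width (i : nat) : R := if Nat.ltb i K then a (S i) - a i else 0.

Definition cell (x : R) : nat := epsilon (inhabits 0%nat) (fun i => (i < K)%nat /\ a i <= x < a (S i)).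

Definition period_set (d : nat) (x : R) : Prop := 0 <= x < 1 /\ period sg (cell x) = d.

Definition has_period (d : nat) : Prop := exists c, (c < K)%nat /\ period sg c = d.

Definition orbit_class (d r : nat) : Prop := orbit_least K sg r /\ period sg r = d.

Definition total_length (d : nat) : R := sum_when (orbit_class d) width K.

Definition offset (d r : nat) : R := sum_when (orbit_class d) width r.

Definition chart_scale (d : nat) : R := INR d * total_length d.

(* block [orbit_pos], then the offset of the orbit representative among the representatives
   of period [d], then the position inside the cell *)
Definition chart_num (d : nat) (x : R) : R :=
  INR (orbit_pos K sg (cell x)) * total_length d + offset d (orbit_rep K sg (cell x)) + (x - a (cell x)).

Definition chart (d : nat) (x : R) : R := chart_num d x / chart_scale d.

Definition chart_inv (d : nat) (u : R) : R :=
  epsilon (inhabits 0) (fun x => period_set d x /\ chart d x = u).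

Definition chart_breaks (d : nat) : list R :=
  flat_map (fun c => chart d (a c) :: (chart d (a c) + width c / chart_scale d) :: nil) (seq 0 K).

Lemma width_eq i : (i < K)%nat -> width i = a (S i) - a i.
Proof. intros Hi; unfold width; destruct (Nat.ltb_spec i K); [reflexivity | lia]. Qed.

Lemma width_nonneg i : 0 <= width i.
Proof. unfold width; destruct (Nat.ltb_spec i K) as [Hi|]; [pose proof (Hinc i Hi); lra | lra]. Qed.

Lemma width_pos i : (i < K)%nat -> 0 < width i.
Proof. intros Hi; rewrite width_eq by exact Hi; pose proof (Hinc i Hi); lra. Qed.

Lemma width_iter j i : (i < K)%nat -> width (Nat.iter j sg i) = width i.
Proof.
  induction j as [|j IH]; intros Hi; simpl; auto; rewrite <- (IH Hi).
  assert (Hl : (Nat.iter j sg i < K)%nat) by (apply (iter_perm_range Hsg), Hi).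
  rewrite !width_eq by (auto; apply (cells_perm_range _ _ _ _ _ CS), Hl).
  symmetry; apply (cells_width _ _ _ _ _ CS), Hl.
Qed.

Lemma cell_bounds i x : (i < K)%nat -> a i <= x < a (S i) -> 0 <= x < 1.
Proof.
  intros Hi Hx; rewrite <- (cells_start _ _ _ _ _ CS), <- (cells_end _ _ _ _ _ CS).
  pose proof (increasing_le K a Hinc 0 i ltac:(lia) ltac:(lia)).
  pose proof (increasing_le K a Hinc (S i) K ltac:(lia) ltac:(lia)); lra.
Qed.

Lemma cell_spec x : 0 <= x < 1 -> (cell x < K)%nat /\ a (cell x) <= x < a (S (cell x)).
Proof.
  intros Hx; unfold cell; apply epsilon_spec, (increasing_cover K a Hinc).
  rewrite (cells_start _ _ _ _ _ CS), (cells_end _ _ _ _ _ CS); exact Hx.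
Qed.

Lemma cell_eq x i : (i < K)%nat -> a i <= x < a (S i) -> cell x = i.
Proof.
  intros Hi Hx; destruct (cell_spec x (cell_bounds i x Hi Hx)).
  apply (increasing_cell_unique K a Hinc _ _ x); auto.
Qed.

Lemma cell_iter j i x : (i < K)%nat -> a i <= x < a (S i) ->
  Nat.iter j F x = x - a i + a (Nat.iter j sg i) /\
  a (Nat.iter j sg i) <= Nat.iter j F x < a (S (Nat.iter j sg i)).
Proof.
  induction j as [|j IH]; intros Hi Hx; simpl; [split; [lra | exact Hx]|].
  destruct (IH Hi Hx) as [E1 E2].
  assert (Hl : (Nat.iter j sg i < K)%nat) by (apply (iter_perm_range Hsg), Hi).
  rewrite (cells_translate _ _ _ _ _ CS _ _ Hl E2).
  pose proof (cells_width _ _ _ _ _ CS _ Hl); split; lra.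
Qed.

Lemma period_set_iff d x : 0 <= x < 1 ->
  (period_set d x <-> (0 < d)%nat /\ Nat.iter d F x = x /\
     forall d', (0 < d')%nat -> (d' < d)%nat -> Nat.iter d' F x <> x).
Proof.
  intros Hx; destruct (cell_spec x Hx) as [Hi Hxi]; set (i := cell x) in *.
  assert (Key : forall j, Nat.iter j F x = x <-> Nat.iter j sg i = i).
  { intros j; destruct (cell_iter j i x Hi Hxi) as [E1 E2]; split; intros E.
    - rewrite E in E2; apply (increasing_cell_unique K a Hinc _ _ x); auto.
      apply (iter_perm_range Hsg), Hi.
    - rewrite E1, E; lra. }
  unfold period_set; fold i; split.
  - intros [_ <-]; destruct (period_spec Hsg i Hi) as [P1 [P2 P3]].
    repeat split; auto; [apply Key, P2|].
    intros d' ? ? E; apply Key in E; apply (P3 d'); auto.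
  - intros [D1 [D2 D3]]; split; auto.
    apply (period_unique Hsg); auto; [apply Key, D2|].
    intros d' ? ? E; apply (D3 d'); auto; apply Key, E.
Qed.

Lemma period_set_F d x : period_set d x -> period_set d (F x).
Proof.
  intros [Hx Hp]; destruct (cell_spec x Hx) as [Hi Hxi].
  destruct (cell_iter 1 _ x Hi Hxi) as [_ E2]; simpl in E2.
  assert (Hl : (sg (cell x) < K)%nat) by (apply (perm_range _ _ _ Hsg), Hi).
  split; [apply (cell_bounds _ _ Hl E2)|].
  rewrite (cell_eq _ _ Hl E2), <- Hp; apply (period_iter Hsg 1), Hi.
Qed.

Lemma period_set_1_fixed x : period_set 1 x -> F x = x.
Proof. intros HX; apply (period_set_iff 1 x (proj1 HX)) in HX; apply HX. Qed.

Lemma orbit_class_rep i : (i < K)%nat -> orbit_class (period sg i) (orbit_rep K sg i).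
Proof.
  intros Hi; split; [apply (orbit_rep_spec Hsg), Hi | apply (period_orbit_rep Hsg), Hi].
Qed.

Lemma width_orbit_rep i : (i < K)%nat -> width (orbit_rep K sg i) = width i.
Proof.
  intros Hi; destruct (orbit_pos_spec Hsg i Hi) as [_ J].
  rewrite <- J at 2; symmetry; apply width_iter, (orbit_rep_range Hsg), Hi.
Qed.

Lemma offset_bounds d r : (r < K)%nat -> orbit_class d r ->
  0 <= offset d r /\ offset d r + width r <= total_length d.
Proof.
  intros Hr HP; split; [apply sum_when_nonneg, width_nonneg|].
  apply sum_when_add_lt; auto; apply width_nonneg.
Qed.

Lemma chart_scale_pos d : has_period d -> 0 < total_length d /\ 0 < chart_scale d.
Proof.
  intros [c [Hc <-]].
  pose proof (offset_bounds _ _ ((orbit_rep_range Hsg) c Hc) (orbit_class_rep c Hc)).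
  pose proof (width_pos _ ((orbit_rep_range Hsg) c Hc)).
  pose proof (proj1 (period_spec Hsg c Hc)) as Hd; apply lt_0_INR in Hd.
  unfold chart_scale; split; [|apply Rmult_lt_0_compat]; lra.
Qed.

Lemma chart_num_bounds d x : period_set d x ->
  let i := cell x in let j := orbit_pos K sg i in let r := orbit_rep K sg i in
  INR j * total_length d + offset d r <= chart_num d x /\
  chart_num d x < INR j * total_length d + offset d r + width r /\
  0 <= offset d r /\ offset d r + width r <= total_length d /\ (j < d)%nat.
Proof.
  intros [Hx Hp] i j r; subst j r; destruct (cell_spec x Hx) as [Hi Hxi]; fold i in Hi, Hxi, Hp.
  pose proof (orbit_class_rep i Hi) as HP; rewrite Hp in HP.
  destruct (offset_bounds _ _ ((orbit_rep_range Hsg) i Hi) HP).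
  rewrite (width_orbit_rep i Hi) in *; rewrite (width_eq i Hi) in *.
  destruct (orbit_pos_spec Hsg i Hi) as [J1 _]; rewrite Hp in J1.
  unfold chart_num; fold i; repeat split; auto; lra.
Qed.

Lemma chart_range d x : period_set d x -> 0 <= chart d x < 1.
Proof.
  intros HX; pose proof (chart_num_bounds d x HX) as (B1 & B2 & B3 & B4 & B5).
  destruct (chart_scale_pos d) as [Hl Hs].
  { exists (cell x); split; [apply cell_spec, (proj1 HX) | apply (proj2 HX)]. }
  pose proof (pos_INR (orbit_pos K sg (cell x))); pose proof (INR_lt_nat _ _ B5).
  unfold chart, chart_scale in *; unfold Rdiv; split.
  - apply Rmult_le_pos; [nra | left; apply Rinv_0_lt_compat; lra].
  - apply (Rmult_lt_reg_r (INR d * total_length d)); [lra|].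
    rewrite Rmult_assoc, Rinv_l by lra; nra.
Qed.

Lemma chart_affine d i : (i < K)%nat -> piecewise_affine (/ chart_scale d) nil (a i) (a (S i)) (chart d).
Proof.
  intros Hi x y Hx Hxy Hy _; unfold chart, chart_num.
  rewrite (cell_eq x i Hi ltac:(lra)), (cell_eq y i Hi ltac:(lra)); unfold Rdiv; ring.
Qed.

Lemma chart_affine_unit d : piecewise_affine (/ chart_scale d) (map a (seq 0 (S K)) ++ flat_map (fun _ => nil) (seq 0 K)) 0 1 (chart d).
Proof.
  rewrite <- (cells_start _ _ _ _ _ CS) at 1; rewrite <- (cells_end _ _ _ _ _ CS).
  apply piecewise_affine_glue; auto; intros i Hi; apply chart_affine, Hi.
Qed.

(* Passing to the next cell of an orbit adds one block, except from the last position,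
   which wraps around to block 0. *)
Lemma chart_conj d x : period_set d x -> chart d (F x) = frac_part (chart d x + / INR d).
Proof.
  intros HX; pose proof (chart_range d x HX) as R1.
  pose proof (chart_range d (F x) (period_set_F d x HX)) as R2.
  destruct HX as [Hx Hp]; destruct (cell_spec x Hx) as [Hi Hxi]; set (i := cell x) in *.
  destruct (chart_scale_pos d) as [Hl _]; [exists i; auto|].
  destruct (cell_iter 1 i x Hi Hxi) as [E1 E2]; simpl in E1, E2.
  assert (Hsi : (sg i < K)%nat) by (apply (perm_range _ _ _ Hsg), Hi).
  assert (Ci : cell (F x) = sg i) by (apply cell_eq; auto).
  pose proof (orbit_pos_perm Hsg i Hi) as Jj; rewrite Hp in Jj.
  assert (Hd : (0 < d)%nat) by (rewrite <- Hp; apply (period_spec Hsg i Hi)).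
  assert (Dp : 0 < INR d) by (apply lt_0_INR; auto).
  assert (Ps : chart d (F x) =
            chart d x + (INR (orbit_pos K sg (sg i)) - INR (orbit_pos K sg i)) / INR d).
  { unfold chart, chart_num, chart_scale; rewrite Ci, (orbit_rep_perm Hsg i Hi); fold i.
    rewrite E1; field; lra. }
  destruct (Nat.eqb_spec (S (orbit_pos K sg i)) d) as [e|n]; rewrite Jj in Ps.
  - assert (Ej : INR (orbit_pos K sg i) = INR d - 1) by (rewrite <- e, S_INR; ring).
    rewrite Ej in Ps; simpl INR in Ps.
    replace (chart d x + / INR d) with (chart d (F x) + IZR 1)
      by (rewrite Ps; simpl IZR; field; lra).
    rewrite (frac_part_shift _ 1); simpl IZR; lra.
  - rewrite S_INR in Ps; replace (INR (orbit_pos K sg i) + 1 - INR (orbit_pos K sg i)) with 1 in Ps by ring.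
    unfold Rdiv in Ps; rewrite Rmult_1_l in Ps; rewrite <- Ps; symmetry; apply frac_part_id, R2.
Qed.

Lemma chart_surj d u : has_period d -> 0 <= u < 1 -> exists x, period_set d x /\ chart d x = u.
Proof.
  intros Ex Hu; destruct (chart_scale_pos d Ex) as [Hl _]; destruct Ex as [i0 [Hi0 Hp0]].
  assert (Dp : 0 < INR d) by (rewrite <- Hp0; apply lt_0_INR, (period_spec Hsg i0 Hi0)).
  set (l := total_length d) in *.
  destruct (floor_nat d (u * INR d)) as [j [Hj Hjt]]; [split; nra|].
  (* [t] is the position of [u] inside block [j] *)
  set (t := (u * INR d - INR j) * l).
  destruct (sum_when_find (orbit_class d) width K t) as [r [Hr [[Hrep Hpr] Hrt]]];
    [change (sum_when (orbit_class d) width K) with l; unfold t; nra|].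
  destruct (orbit_rep_pos_iter Hsg r j Hrep ltac:(lia)) as [Rp Jj].
  set (i := Nat.iter j sg r) in *.
  assert (Hi : (i < K)%nat) by (apply (iter_perm_range Hsg), Hr).
  assert (Wi : width i = width r) by (apply width_iter, Hr).
  rewrite (width_eq i Hi) in Wi.
  set (x := a i + (t - offset d r)).
  assert (Hxi : a i <= x < a (S i)) by (unfold x, offset; lra).
  assert (Cx : cell x = i) by (apply cell_eq; auto).
  exists x; split.
  - split; [apply (cell_bounds i); auto|]; rewrite Cx; unfold i; rewrite (period_iter Hsg); auto.
  - unfold chart, chart_num, chart_scale; rewrite Cx, Rp, Jj; fold l; unfold x, t; field; lra.
Qed.

Lemma chart_inj d x y : period_set d x -> period_set d y -> chart d x = chart d y -> x = y.
Proof.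
  intros HX HY E.
  pose proof (chart_num_bounds d x HX) as (B1 & B2 & B3 & B4 & B5).
  pose proof (chart_num_bounds d y HY) as (B1' & B2' & B3' & B4' & B5').
  destruct HX as [Hx Hp], HY as [Hy Hp'].
  destruct (cell_spec x Hx) as [Hi Hxi], (cell_spec y Hy) as [Hi' Hyi].
  set (i := cell x) in *; set (i' := cell y) in *.
  destruct (chart_scale_pos d) as [Hl Hs]; [exists i; auto|].
  set (l := total_length d) in *.
  assert (EN : chart_num d x = chart_num d y).
  { unfold chart in E; apply (Rmult_eq_reg_r (/ chart_scale d)); [exact E|].
    apply Rinv_neq_0_compat; lra. }
  set (j := orbit_pos K sg i) in *; set (j' := orbit_pos K sg i') in *.
  set (r := orbit_rep K sg i) in *; set (r' := orbit_rep K sg i') in *.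
  (* the block index, then the representative, then the cell are read off the numerator *)
  assert (Ejj : j = j').
  { destruct (lt_eq_lt_dec j j') as [[Hlt|]|Hlt]; auto; exfalso;
      pose proof (INR_lt_nat _ _ Hlt); nra. }
  assert (Pr : orbit_class d r) by (rewrite <- Hp; apply orbit_class_rep, Hi).
  assert (Pr' : orbit_class d r') by (rewrite <- Hp'; apply orbit_class_rep, Hi').
  assert (Err : r = r').
  { rewrite Ejj in *; unfold offset in *.
    destruct (lt_eq_lt_dec r r') as [[Hlt|]|Hlt]; auto; exfalso.
    - pose proof (sum_when_add_lt _ _ width_nonneg r r' Pr Hlt); lra.
    - pose proof (sum_when_add_lt _ _ width_nonneg r' r Pr' Hlt); lra. }
  assert (Eii : i = i').
  { rewrite <- (proj2 (orbit_pos_spec Hsg i Hi)), <- (proj2 (orbit_pos_spec Hsg i' Hi')).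
    fold j r j' r'; rewrite Ejj, Err; reflexivity. }
  unfold chart_num in EN; fold i i' j j' r r' in EN; rewrite <- Eii, Ejj, Err in EN; lra.
Qed.

Section FixedPeriod.
Variable d : nat.
Hypothesis Hd : has_period d.

Lemma chart_inv_spec u : 0 <= u < 1 -> period_set d (chart_inv d u) /\ chart d (chart_inv d u) = u.
Proof. intros Hu; unfold chart_inv; apply epsilon_spec, chart_surj; auto. Qed.

Lemma chart_inv_range u : 0 <= u < 1 -> 0 <= chart_inv d u < 1.
Proof. intros Hu; apply (chart_inv_spec u Hu). Qed.

Lemma chart_inv_chart x : period_set d x -> chart_inv d (chart d x) = x.
Proof.
  intros HX; destruct (chart_inv_spec (chart d x) (chart_range d x HX)).
  apply (chart_inj d); auto.
Qed.

Lemma chart_inv_F u : 0 <= u < 1 -> chart_inv d (frac_part (u + / INR d)) = F (chart_inv d u).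
Proof.
  intros Hu; destruct (chart_inv_spec u Hu) as [HX Hp].
  rewrite <- Hp at 1; rewrite <- chart_conj by exact HX.
  apply chart_inv_chart, period_set_F, HX.
Qed.

(* [chart_inv] can only break where [chart] maps a cell endpoint. *)
Lemma chart_inv_affine : piecewise_affine (chart_scale d) (chart_breaks d) 0 1 (chart_inv d).
Proof.
  intros u v Hu Huv Hv Hb; destruct (chart_scale_pos d Hd) as [_ Hs].
  destruct (chart_inv_spec u ltac:(lra)) as [HX Hpx]; set (x := chart_inv d u) in *.
  destruct (cell_spec x (proj1 HX)) as [Hc Hxc]; set (c := cell x) in *.
  assert (Pc : forall z, a c <= z < a (S c) -> chart d z = chart d (a c) + (z - a c) / chart_scale d).
  { intros z Hz; pose proof (chart_affine d c Hc (a c) z ltac:(lra) ltac:(lra) ltac:(lra)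
      ltac:(intros ? [])); unfold Rdiv; lra. }
  set (y := x + (v - u) * chart_scale d).
  assert (Hy : y < a (S c)).
  { destruct (Rlt_dec y (a (S c))) as [|Hge]; auto; exfalso.
    apply (Hb (chart d (a c) + width c / chart_scale d)).
    - apply in_flat_map; exists c; split; [apply in_seq; lia | simpl; auto].
    - assert (Ev : v = chart d (a c) + (y - a c) / chart_scale d).
      { replace (chart d (a c)) with (u - (x - a c) / chart_scale d) by (rewrite <- Hpx, (Pc x Hxc); ring).
        unfold y; field; lra. }
      rewrite Ev, <- Hpx, (Pc x Hxc), (width_eq c Hc); split.
      + apply Rplus_lt_compat_l, Rmult_lt_compat_r; [apply Rinv_0_lt_compat|]; lra.
      + apply Rplus_le_compat_l, Rmult_le_compat_r; [left; apply Rinv_0_lt_compat|]; lra. }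
  assert (Hyc : a c <= y < a (S c)) by (split; [unfold y; nra | exact Hy]).
  assert (HXy : period_set d y).
  { split; [apply (cell_bounds c y Hc Hyc)|].
    rewrite (cell_eq y c Hc Hyc); apply HX. }
  assert (Py : chart d y = v).
  { rewrite (Pc y Hyc).
    replace (chart d (a c)) with (u - (x - a c) / chart_scale d) by (rewrite <- Hpx, (Pc x Hxc); ring).
    unfold y; field; lra. }
  assert (Ey : chart_inv d v = y) by (rewrite <- Py; apply chart_inv_chart, HXy).
  rewrite Ey; unfold y; ring.
Qed.

End FixedPeriod.

End Chart.

(** * Components of the centralizer *)

Lemma iet_has_inverse h : is_iet h -> exists g, (forall p, g (h p) = p) /\ (forall p, h (g p) = p).
Proof. intros [Hb _]; exact Hb. Qed.

Lemma iet_inverse_family (gg : nat -> T1 -> T1) n : (forall i, (i < n)%nat -> is_iet (gg i)) ->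
  exists gi, forall i, (i < n)%nat -> (forall p, gi i (gg i p) = p) /\ (forall p, gg i (gi i p) = p).
Proof.
  intros Hiet.
  exists (fun i => epsilon (inhabits (fun p : T1 => p))
                    (fun g => (forall p, g (gg i p) = p) /\ (forall p, gg i (g p) = p))).
  intros i Hi; apply epsilon_spec, iet_has_inverse, Hiet, Hi.
Qed.

Lemma G_is_iet d g : G d g -> is_iet g.
Proof. unfold G; destruct (Nat.eqb d 1); [auto | intros [H _]; exact H]. Qed.

Lemma inverse_commutes {A : Type} (f h g : A -> A) : (forall p, f (h p) = h (f p)) ->
  (forall p, g (h p) = p) -> (forall p, h (g p) = p) -> forall p, f (g p) = g (f p).
Proof. intros Hc Hg Hh p; rewrite <- (Hg (f (g p))), <- Hc, Hh; reflexivity. Qed.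

Definition periods (K : nat) (sg : nat -> nat) : list nat := nodup Nat.eq_dec (map (period sg) (seq 0 K)).

Section Components.
Variables (f : T1 -> T1) (K : nat) (a : nat -> R) (sg : nat -> nat) (m : nat).
Hypothesis CS : cell_structure (lift f) K a sg m.

Let Hsg : perm_of_order K sg m.
Proof. destruct CS; split; auto. Qed.

(* [X_d] is [period_set d]; read through [chart d], [h] acts on it as an element of [G_d]. *)
Definition component (d : nat) (h : T1 -> T1) : T1 -> T1 :=
  fun p => toT1 (chart K a sg d (lift h (chart_inv K a sg d (coord p)))).

Lemma commuting_period_set h : (forall p, f (h p) = h (f p)) -> (exists g, forall p, g (h p) = p) ->
  forall d x, period_set K a sg d x -> period_set K a sg d (lift h x).
Proof.
  intros Hc [g Hg] d x HX; pose proof (proj1 HX) as Hx.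
  apply (period_set_iff _ _ _ _ _ CS d x Hx) in HX.
  apply (period_set_iff _ _ _ _ _ CS d (lift h x) (lift_range h x)).
  assert (It : forall j, Nat.iter j (lift f) (lift h x) = lift h (Nat.iter j (lift f) x))
    by (intros j; apply (iter_commute (lift f) (lift h)), lift_commute, Hc).
  assert (Inj : forall y z, 0 <= y < 1 -> 0 <= z < 1 -> lift h y = lift h z -> y = z).
  { intros y z Hy Hz E; rewrite <- (lift_cancel g h Hg y Hy), <- (lift_cancel g h Hg z Hz), E; auto. }
  destruct HX as [D1 [D2 D3]]; repeat split; auto.
  - rewrite It, D2; reflexivity.
  - intros d' H1 H2 E; rewrite It in E; apply (D3 d' H1 H2), Inj; auto; apply iter_lift_range, Hx.
Qed.

Lemma centralizer_period_set h : centralizer f h ->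
  forall d x, period_set K a sg d x -> period_set K a sg d (lift h x).
Proof.
  intros [Hiet Hc]; destruct (iet_has_inverse h Hiet) as [g [Hg _]].
  apply commuting_period_set; eauto.
Qed.

Section FixedPeriod.
Variable d : nat.
Hypothesis Hd : has_period K sg d.

Lemma lift_component h u : 0 <= u < 1 ->
  (forall x, period_set K a sg d x -> period_set K a sg d (lift h x)) ->
  lift (component d h) u = chart K a sg d (lift h (chart_inv K a sg d u)).
Proof.
  intros Hu Hp; unfold lift at 1, component; fold (coord (toT1 u)); rewrite (coord_toT1 u Hu).
  apply coord_toT1, (chart_range _ _ _ _ _ CS), Hp, (chart_inv_spec _ _ _ _ _ CS d Hd u Hu).
Qed.

Lemma component_cancel h1 h2 :
  (forall x, period_set K a sg d x -> period_set K a sg d (lift h1 x)) ->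
  (forall x, period_set K a sg d x -> period_set K a sg d (lift h2 x)) ->
  (forall x, 0 <= x < 1 -> lift h1 (lift h2 x) = x) ->
  forall p, component d h1 (component d h2 p) = p.
Proof.
  intros P1 P2 E p; apply coord_inj; rewrite <- lift_coord, <- (lift_coord (component d h2)).
  pose proof (coord_range p) as Hp.
  destruct (chart_inv_spec _ _ _ _ _ CS d Hd _ Hp) as [X1 X2].
  rewrite (lift_component h2) by auto.
  rewrite (lift_component h1) by (auto; apply (chart_range _ _ _ _ _ CS), P2, X1).
  rewrite (chart_inv_chart _ _ _ _ _ CS d Hd) by (apply P2, X1).
  rewrite E by apply X1; exact X2.
Qed.

Lemma component_comp h1 h2 : centralizer f h1 -> centralizer f h2 ->
  component d (fun x => h1 (h2 x)) = (fun x => component d h1 (component d h2 x)).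
Proof.
  intros C1 C2; pose proof (centralizer_period_set h1 C1 d) as P1.
  pose proof (centralizer_period_set h2 C2 d) as P2.
  assert (P12 : forall x, period_set K a sg d x -> period_set K a sg d (lift (fun y => h1 (h2 y)) x))
    by (intros x HX; rewrite lift_comp; auto).
  apply lift_inj; intros u Hu.
  destruct (chart_inv_spec _ _ _ _ _ CS d Hd u Hu) as [X1 X2].
  rewrite (lift_comp (component d h1)), (lift_component _ u), (lift_component h2 u) by auto.
  rewrite (lift_component h1) by (auto; apply (chart_range _ _ _ _ _ CS), P2, X1).
  rewrite (chart_inv_chart _ _ _ _ _ CS d Hd) by (apply P2, X1).
  rewrite lift_comp; reflexivity.
Qed.

Lemma component_affine h g : is_iet h -> (forall p, g (h p) = p) ->
  (forall x, period_set K a sg d x -> period_set K a sg d (lift h x)) ->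
  exists L, piecewise_affine 1 L 0 1 (lift (component d h)).
Proof.
  intros Hiet Hg Ph; destruct (chart_scale_pos _ _ _ _ _ CS d Hd) as [_ Hs].
  destruct (iet_piecewise_affine h Hiet) as [Lh HLh].
  pose proof (chart_inv_spec _ _ _ _ _ CS d Hd) as Sp.
  eexists; eapply (piecewise_affine_ext _ _ _ _ (fun u => chart K a sg d (lift h (chart_inv K a sg d u))));
    [|intros u Hu; symmetry; apply lift_component; auto].
  eapply (piecewise_affine_slope ((chart_scale K a sg d * 1) * / chart_scale K a sg d)); [field; lra|].
  eapply (piecewise_affine_comp _ _ _ _ _ _ 0 1 _ _ (fun y => chart K a sg d (lift g y))).
  - lra.
  - apply (piecewise_affine_comp _ 1 _ Lh 0 1 0 1 _ _ (chart K a sg d) Hs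
             (chart_inv_affine _ _ _ _ _ CS d Hd)).
    + intros x Hx; apply (chart_inv_range _ _ _ _ _ CS d Hd x Hx).
    + exact HLh.
    + intros z Hz; apply Sp, Hz.
  - intros x Hx; apply lift_range.
  - apply (chart_affine_unit _ _ _ _ _ CS d).
  - intros z Hz; cbv beta; rewrite (lift_cancel g h Hg) by (apply (chart_inv_range _ _ _ _ _ CS d Hd z Hz)).
    apply Sp, Hz.
Qed.

Lemma component_commutes_rot h : centralizer f h ->
  forall p, rot d (component d h p) = component d h (rot d p).
Proof.
  intros Ch p; pose proof (centralizer_period_set h Ch d) as Ph.
  apply coord_inj; rewrite <- !lift_coord; pose proof (coord_range p) as Hp.
  destruct (chart_inv_spec _ _ _ _ _ CS d Hd _ Hp) as [X1 X2].
  rewrite (lift_component h) by (auto; apply lift_range).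
  rewrite (lift_rot d (coord p) Hp), (lift_component h) by (auto; apply frac_in).
  rewrite (chart_inv_F _ _ _ _ _ CS d Hd _ Hp).
  rewrite lift_rot by (apply (chart_range _ _ _ _ _ CS), Ph, X1).
  rewrite <- (lift_commute f h (proj2 Ch)).
  rewrite (chart_conj _ _ _ _ _ CS d _ (Ph _ X1)); reflexivity.
Qed.

Lemma component_in_G h : centralizer f h -> G d (component d h).
Proof.
  intros Ch; destruct (iet_has_inverse h (proj1 Ch)) as [g [Hg Hh]].
  pose proof (centralizer_period_set h Ch d) as Ph.
  assert (Pg : forall x, period_set K a sg d x -> period_set K a sg d (lift g x))
    by (apply commuting_period_set; [apply (inverse_commutes f h); [apply Ch | |]|exists h]; auto).
  assert (IET : is_iet (component d h)).
  { destruct (component_affine h g (proj1 Ch) Hg Ph) as [L HL].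
    apply (piecewise_affine_iet _ L); auto.
    exists (component d g); split; apply component_cancel; auto; apply lift_cancel; auto. }
  unfold G; destruct (Nat.eqb_spec d 1); auto.
  split; [exact IET | apply component_commutes_rot, Ch].
Qed.

End FixedPeriod.

Definition nth_period (i : nat) : nat := nth i (periods K sg) 0%nat.

Definition period_index (x : R) : nat :=
  epsilon (inhabits 0%nat)
    (fun i => (i < length (periods K sg))%nat /\ nth_period i = period sg (cell K a x)).

(* The inverse of the components: act on each [X_d] as [gg i] does, read through [chart d]. *)
Definition assemble_lift (gg : nat -> T1 -> T1) (x : R) : R :=
  chart_inv K a sg (nth_period (period_index x))
    (lift (gg (period_index x)) (chart K a sg (nth_period (period_index x)) x)).

Definition assemble (gg : nat -> T1 -> T1) : T1 -> T1 := fun p => toT1 (assemble_lift gg (coord p)).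

Lemma nth_period_has_period i : (i < length (periods K sg))%nat -> has_period K sg (nth_period i).
Proof.
  intros Hi; pose proof (nth_In (periods K sg) 0%nat Hi) as H; unfold periods in H.
  apply nodup_In, in_map_iff in H as [c [E Hc]]; apply in_seq in Hc.
  exists c; split; [lia | exact E].
Qed.

Lemma nth_period_pos i : (i < length (periods K sg))%nat -> (1 <= nth_period i)%nat.
Proof.
  intros Hi; destruct (nth_period_has_period i Hi) as [c [Hc <-]].
  apply (period_spec Hsg c Hc).
Qed.

Lemma nth_period_inj i j : (i < length (periods K sg))%nat -> (j < length (periods K sg))%nat ->
  nth_period i = nth_period j -> i = j.
Proof. intros Hi Hj E; apply (NoDup_nth (periods K sg) 0%nat); auto; apply NoDup_nodup. Qed.

Lemma period_index_spec x : 0 <= x < 1 ->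
  (period_index x < length (periods K sg))%nat /\ period_set K a sg (nth_period (period_index x)) x.
Proof.
  intros Hx.
  assert (H : (period_index x < length (periods K sg))%nat /\
              nth_period (period_index x) = period sg (cell K a x)).
  { unfold period_index; apply epsilon_spec.
    assert (Hin : In (period sg (cell K a x)) (periods K sg))
      by (apply nodup_In, in_map, in_seq; pose proof (cell_spec _ _ _ _ _ CS x Hx); lia).
    apply (In_nth _ _ 0%nat) in Hin as [i [Hi E]]; exists i; auto. }
  destruct H as [H1 H2]; split; [exact H1 | split; auto].
Qed.

Lemma period_index_eq i x : (i < length (periods K sg))%nat ->
  period_set K a sg (nth_period i) x -> period_index x = i.
Proof.
  intros Hi HX; destruct (period_index_spec x (proj1 HX)) as [H1 [_ H2]].
  apply nth_period_inj; auto; rewrite <- H2; exact (proj2 HX).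
Qed.

Lemma assemble_lift_spec gg x : 0 <= x < 1 ->
  period_set K a sg (nth_period (period_index x)) (assemble_lift gg x) /\
  period_index (assemble_lift gg x) = period_index x.
Proof.
  intros Hx; destruct (period_index_spec x Hx) as [H1 H2].
  assert (X : period_set K a sg (nth_period (period_index x)) (assemble_lift gg x)).
  { apply (chart_inv_spec _ _ _ _ _ CS); [apply nth_period_has_period, H1 | apply lift_range]. }
  split; [exact X | apply period_index_eq; auto].
Qed.

Lemma lift_assemble gg x : 0 <= x < 1 -> lift (assemble gg) x = assemble_lift gg x.
Proof.
  intros Hx; unfold lift, assemble; fold (coord (toT1 x)); rewrite (coord_toT1 x Hx).
  apply coord_toT1, (assemble_lift_spec gg x Hx).
Qed.

Lemma assemble_cancel gg gi :
  (forall i, (i < length (periods K sg))%nat -> forall p, gi i (gg i p) = p) ->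
  forall p, assemble gi (assemble gg p) = p.
Proof.
  intros Hinv p; apply coord_inj; pose proof (coord_range p) as Hp.
  rewrite <- lift_coord, <- (lift_coord (assemble gg)), (lift_assemble gg) by exact Hp.
  destruct (assemble_lift_spec gg (coord p) Hp) as [X1 E1].
  rewrite (lift_assemble gi _ (proj1 X1)).
  destruct (period_index_spec (coord p) Hp) as [I1 I2].
  unfold assemble_lift at 1; rewrite E1; unfold assemble_lift.
  set (i := period_index (coord p)) in *; set (d := nth_period i) in *.
  assert (Ex : has_period K sg d) by (apply nth_period_has_period, I1).
  rewrite (proj2 (chart_inv_spec _ _ _ _ _ CS d Ex _ (lift_range _ _))).
  rewrite (lift_cancel (gi i) (gg i) (Hinv i I1)) by (apply (chart_range _ _ _ _ _ CS), I2).
  apply (chart_inv_chart _ _ _ _ _ CS d Ex), I2.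
Qed.

(* On [X_1] the map [f] is the identity, so there is nothing to check; on [X_d], [d >= 2],
   [f] reads as [rot d], which commutes with [gg i]. *)
Lemma assemble_commutes gg :
  (forall i, (i < length (periods K sg))%nat -> G (nth_period i) (gg i)) ->
  forall p, f (assemble gg p) = assemble gg (f p).
Proof.
  intros HG p; apply coord_inj; pose proof (coord_range p) as Hp.
  rewrite <- !lift_coord, (lift_assemble gg) by exact Hp.
  rewrite (lift_assemble gg) by apply lift_range.
  destruct (period_index_spec (coord p) Hp) as [I1 X1].
  set (i := period_index (coord p)) in *; set (d := nth_period i) in *.
  assert (XF : period_set K a sg d (lift f (coord p))) by (apply (period_set_F _ _ _ _ _ CS), X1).
  assert (IF : period_index (lift f (coord p)) = i) by (apply period_index_eq; auto).
  destruct (assemble_lift_spec gg (coord p) Hp) as [X2 _]; fold i d in X2.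
  pose proof (HG i I1) as Gi; fold d in Gi; unfold G in Gi.
  destruct (Nat.eqb_spec d 1) as [e|n].
  - rewrite e in X1, X2.
    rewrite (period_set_1_fixed _ _ _ _ _ CS _ X2), (period_set_1_fixed _ _ _ _ _ CS _ X1); reflexivity.
  - destruct Gi as [_ Gc].
    assert (Ex : has_period K sg d) by (apply nth_period_has_period, I1).
    unfold assemble_lift; rewrite IF; fold i d.
    rewrite (chart_conj _ _ _ _ _ CS d _ X1).
    pose proof (chart_range _ _ _ _ _ CS d _ X1) as R1.
    rewrite <- (lift_rot d _ R1), <- (lift_commute _ _ Gc), lift_rot by apply lift_range.
    rewrite (chart_inv_F _ _ _ _ _ CS d Ex) by apply lift_range; reflexivity.
Qed.

Lemma assemble_affine_cell gg gi c : (c < K)%nat ->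
  is_iet (gg (period_index (a c))) ->
  (forall p, gi (period_index (a c)) (gg (period_index (a c)) p) = p) ->
  exists L, piecewise_affine 1 L (a c) (a (S c)) (assemble_lift gg).
Proof.
  intros Hc Hiet Hinv; pose proof (cells_increasing _ _ _ _ _ CS c Hc) as Hac.
  pose proof (cell_bounds _ _ _ _ _ CS c (a c) Hc ltac:(lra)) as Ha.
  destruct (period_index_spec (a c) Ha) as [I1 X1].
  set (i := period_index (a c)) in *; set (d := nth_period i) in *.
  assert (Ex : has_period K sg d) by (apply nth_period_has_period, I1).
  destruct (chart_scale_pos _ _ _ _ _ CS d Ex) as [_ Hs].
  destruct (iet_piecewise_affine _ Hiet) as [Lg HLg].
  assert (Xz : forall z, a c <= z < a (S c) -> period_set K a sg d z /\ period_index z = i).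
  { intros z Hz; assert (Xz : period_set K a sg d z).
    { split; [apply (cell_bounds _ _ _ _ _ CS c z Hc Hz)|].
      rewrite (cell_eq _ _ _ _ _ CS z c Hc Hz), <- (cell_eq _ _ _ _ _ CS (a c) c Hc ltac:(lra)).
      apply X1. }
    split; [exact Xz | apply period_index_eq; auto]. }
  eexists; eapply (piecewise_affine_ext _ _ _ _ (fun z => chart_inv K a sg d (lift (gg i) (chart K a sg d z))));
    [|intros z Hz; unfold assemble_lift; destruct (Xz z Hz) as [_ ->]; reflexivity].
  eapply (piecewise_affine_slope ((/ chart_scale K a sg d * 1) * chart_scale K a sg d)); [field; lra|].
  eapply (piecewise_affine_comp _ _ _ _ _ _ 0 1 _ _ (fun y => chart_inv K a sg d (lift (gi i) y))).
  - apply Rmult_lt_0_compat; [apply Rinv_0_lt_compat|]; lra.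
  - apply (piecewise_affine_comp _ 1 nil Lg _ _ 0 1 _ _ (chart_inv K a sg d)).
    + apply Rinv_0_lt_compat, Hs.
    + apply (chart_affine _ _ _ _ _ CS d c Hc).
    + intros x Hx; apply (chart_range _ _ _ _ _ CS), Xz, Hx.
    + exact HLg.
    + intros z Hz; apply (chart_inv_chart _ _ _ _ _ CS d Ex), Xz, Hz.
  - intros x Hx; apply lift_range.
  - apply (chart_inv_affine _ _ _ _ _ CS d Ex).
  - intros z Hz; cbv beta.
    rewrite (lift_cancel (gi i) (gg i) Hinv) by (apply (chart_range _ _ _ _ _ CS), Xz, Hz).
    apply (chart_inv_chart _ _ _ _ _ CS d Ex), Xz, Hz.
Qed.

Lemma assemble_iet gg gi :
  (forall i, (i < length (periods K sg))%nat -> is_iet (gg i)) ->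
  (forall i, (i < length (periods K sg))%nat -> forall p, gi i (gg i p) = p) ->
  (forall i, (i < length (periods K sg))%nat -> forall p, gg i (gi i p) = p) ->
  is_iet (assemble gg).
Proof.
  intros Hiet Hl Hr.
  set (Ls := fun c => epsilon (inhabits nil)
                (fun L => piecewise_affine 1 L (a c) (a (S c)) (assemble_lift gg))).
  assert (HLs : forall c, (c < K)%nat -> piecewise_affine 1 (Ls c) (a c) (a (S c)) (assemble_lift gg)).
  { intros c Hc; unfold Ls; apply epsilon_spec.
    destruct (period_index_spec (a c)) as [I1 _].
    { apply (cell_bounds _ _ _ _ _ CS c); auto; pose proof (cells_increasing _ _ _ _ _ CS c Hc); lra. }
    apply (assemble_affine_cell gg gi c Hc); [apply Hiet | apply Hl]; exact I1. }
  pose proof (piecewise_affine_glue 1 K a Ls _ (cells_increasing _ _ _ _ _ CS) HLs) as HL.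
  rewrite (cells_start _ _ _ _ _ CS), (cells_end _ _ _ _ _ CS) in HL.
  eapply (piecewise_affine_iet _ _ (ex_intro _ (assemble gi) (conj (assemble_cancel gg gi Hl)
                                                               (assemble_cancel gi gg Hr)))).
  apply (piecewise_affine_ext _ _ _ _ _ _ HL); intros x Hx; symmetry; apply lift_assemble, Hx.
Qed.

Lemma component_assemble gg i : (i < length (periods K sg))%nat ->
  component (nth_period i) (assemble gg) = gg i.
Proof.
  intros Hi; set (d := nth_period i).
  assert (Ex : has_period K sg d) by (apply nth_period_has_period, Hi).
  assert (PH : forall x, period_set K a sg d x -> period_set K a sg d (lift (assemble gg) x)).
  { intros x HX; rewrite (lift_assemble gg x (proj1 HX)).
    destruct (assemble_lift_spec gg x (proj1 HX)) as [X2 _].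
    rewrite (period_index_eq i x Hi HX) in X2; exact X2. }
  apply lift_inj; intros u Hu.
  rewrite (lift_component d Ex _ u Hu PH).
  destruct (chart_inv_spec _ _ _ _ _ CS d Ex u Hu) as [X1 E1].
  rewrite (lift_assemble gg _ (proj1 X1)); unfold assemble_lift.
  rewrite (period_index_eq i _ Hi X1); fold d; rewrite E1.
  apply (chart_inv_spec _ _ _ _ _ CS d Ex _ (lift_range _ _)).
Qed.

(* Each point lies in some [X_d], where [h] is recovered from its [d]-th component. *)
Lemma components_injective h1 h2 : centralizer f h1 -> centralizer f h2 ->
  (forall i, (i < length (periods K sg))%nat -> component (nth_period i) h1 = component (nth_period i) h2) ->
  h1 = h2.
Proof.
  intros C1 C2 E; apply lift_inj; intros x Hx.
  destruct (period_index_spec x Hx) as [I1 X1].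
  set (i := period_index x) in *; set (d := nth_period i) in *.
  assert (Ex : has_period K sg d) by (apply nth_period_has_period, I1).
  pose proof (centralizer_period_set h1 C1 d) as P1; pose proof (centralizer_period_set h2 C2 d) as P2.
  pose proof (chart_range _ _ _ _ _ CS d x X1) as R.
  assert (Q : lift (component d h1) (chart K a sg d x) = lift (component d h2) (chart K a sg d x))
    by (unfold d; rewrite (E i I1); reflexivity).
  rewrite !(lift_component d Ex _ _ R) in Q by auto.
  rewrite (chart_inv_chart _ _ _ _ _ CS d Ex x X1) in Q.
  apply (chart_inj _ _ _ _ _ CS d); auto.
Qed.

End Components.

Theorem corollary5p6 (f : T1 -> T1) :
  is_iet f -> finite_order f ->
  exists (k : nat) (ns : nat -> nat) (phi : (T1 -> T1) -> nat -> (T1 -> T1)),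
    (forall i, (i < k)%nat -> (1 <= ns i)%nat) /\
    (forall h, centralizer f h -> forall i, (i < k)%nat -> G (ns i) (phi h i)) /\
    (forall h1 h2, centralizer f h1 -> centralizer f h2 ->
        (forall i, (i < k)%nat -> phi h1 i = phi h2 i) -> h1 = h2) /\
    (forall g : nat -> T1 -> T1, (forall i, (i < k)%nat -> G (ns i) (g i)) ->
        exists h, centralizer f h /\ forall i, (i < k)%nat -> phi h i = g i) /\
    (forall h1 h2, centralizer f h1 -> centralizer f h2 ->
        forall i, (i < k)%nat ->
          phi (fun x => h1 (h2 x)) i = (fun x => phi h1 i (phi h2 i x))).
Proof.
  intros Hf Hfo; destruct (finite_order_cell_structure f Hf Hfo) as [K [a [sg [m CS]]]].
  exists (length (periods K sg)), (nth_period K sg), (fun h i => component K a sg (nth_period K sg i) h).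
  repeat split.
  - intros i Hi; apply (nth_period_pos f K a sg m CS i Hi).
  - intros h Ch i Hi; apply (component_in_G f K a sg m CS); [apply nth_period_has_period, Hi | exact Ch].
  - apply (components_injective f K a sg m CS).
  - intros g HG; pose proof (fun i Hi => G_is_iet _ _ (HG i Hi)) as Hiet.
    destruct (iet_inverse_family g _ Hiet) as [gi Hgi].
    exists (assemble K a sg g); split; [split|].
    + apply (assemble_iet f K a sg m CS g gi Hiet); intros i Hi; apply Hgi, Hi.
    + apply (assemble_commutes f K a sg m CS g HG).
    + intros i Hi; apply (component_assemble f K a sg m CS g i Hi).
  - intros h1 h2 C1 C2 i Hi.
    apply (component_comp f K a sg m CS); [apply nth_period_has_period, Hi | exact C1 | exact C2].
Qed.
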